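(* Let $R$ be a commutative Noetherian ring with $\operatorname{Spec}(R)$ connected, and let $\phi\colon\mathbb{Z}\to\mathsf{P}(\operatorname{Spec}(R))$ be an sp-filtration satisfying the weak Cousin condition which is neither the constant filtration with value $\varnothing$ nor the constant filtration with value $\operatorname{Spec}(R)$. Then: (1) $\bigcap_{i\in\mathbb{Z}}\phi(i)=\varnothing$; (2) there exists $j_0\in\mathbb{Z}$ with $\phi(j_0)=\operatorname{Spec}(R)$; (3) if $R$ has finite Krull dimension, there exists $k\in\mathbb{Z}$ with $\phi(k)=\varnothing$.
   Context: An sp-filtration is a decreasing map $\phi\colon\mathbb{Z}\to\mathsf{P}(\operatorname{Spec}(R))$ whose values are subsets stable under specialization. $\phi$ satisfies the weak Cousin condition if for every $j\in\mathbb{Z}$ and primes ${\mathfrak p}\subsetneq{\mathfrak q}$ with no prime strictly between them, ${\mathfrak q}\in\phi(j)$ implies ${\mathfrak p}\in\phi(j-1)$. *)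

From mathcomp Require Import all_boot all_order all_algebra.
Set Implicit Arguments. Unset Strict Implicit. Unset Printing Implicit Defensive.
Import Order.TTheory GRing.Theory Num.Theory.
Local Open Scope ring_scope.

Section CommAlg.
Variable R : comRingType.

Definition is_ideal (I : R -> Prop) : Prop :=
  [/\ I 0, (forall x y, I x -> I y -> I (x + y)) & (forall r x, I x -> I (r * x))].

Definition is_prime_ideal (P : R -> Prop) : Prop :=
  [/\ is_ideal P, ~ P 1 & (forall a b, P (a * b) -> P a \/ P b)].

Definition Spec := {P : R -> Prop | is_prime_ideal P}.

Definition prime_le (p q : Spec) : Prop := forall x, proj1_sig p x -> proj1_sig q x.
Definition prime_lt (p q : Spec) : Prop :=
  prime_le p q /\ exists x, proj1_sig q x /\ ~ proj1_sig p x.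

Definition noetherian : Prop :=
  forall I : nat -> (R -> Prop),
    (forall n, is_ideal (I n)) ->
    (forall n x, I n x -> I n.+1 x) ->
    exists n, forall m, (n <= m)%N -> forall x, I m x <-> I n x.

Definition V (I : R -> Prop) (p : Spec) : Prop := forall x, I x -> proj1_sig p x.

(* Spec R is connected in the Zariski topology: it is not the disjoint
   union of two nonempty closed subsets (closed sets are exactly the V(I)). *)
Definition spec_connected : Prop :=
  forall I J : R -> Prop, is_ideal I -> is_ideal J ->
    (forall p, V I p \/ V J p) ->
    (forall p, ~ (V I p /\ V J p)) ->
    (forall p, ~ V I p) \/ (forall p, ~ V J p).

Definition finite_krull_dim : Prop :=
  exists n : nat, forall (m : nat) (c : nat -> Spec),
    (forall k, (k < m)%N -> prime_lt (c k) (c k.+1)) -> (m <= n)%N.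

Definition sp_stable (S : Spec -> Prop) : Prop :=
  forall p q, S p -> prime_le p q -> S q.

Definition sp_filtration (phi : int -> Spec -> Prop) : Prop :=
  (forall i, sp_stable (phi i)) /\
  (forall i j p, i <= j -> phi j p -> phi i p).

Definition weak_cousin (phi : int -> Spec -> Prop) : Prop :=
  forall (j : int) (p q : Spec),
    prime_lt p q ->
    (forall r : Spec, ~ (prime_lt p r /\ prime_lt r q)) ->
    phi j q -> phi (j - 1) p.

End CommAlg.

(* A subset X of Spec R closed under both specialization and generalization is V of
   the intersection of the minimal primes it contains (prime avoidance over the finitely
   many minimal primes), and so is its complement; connectedness forces X to be empty or
   everything.  For a weak Cousin sp-filtration phi, the meet and the union of the phi i
   are closed under specialization, and the weak Cousin condition closes them under
   generalization along covers p < q (no prime strictly between).  In a Noetherian ring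
   every strict inclusion p < q contains a cover p < r <= q: take r minimal over p + (x)
   with x in q \ p; Krull's principal ideal theorem, proved through the Artinian ring
   R_r/(p + (x)) and Nakayama's lemma, shows that r covers p.  Hence the meet is empty
   and the union is all of Spec R, which gives (1), and (2) because only finitely many
   minimal primes need to be reached.  Along a chain of primes the index drops by at most
   its length, which is bounded by the Krull dimension, giving (3). *)

From mathcomp Require Import all_boot all_order all_algebra.
From mathcomp Require Import ring.
From Stdlib Require Import Classical ClassicalEpsilon.
Import Order.TTheory GRing.Theory Num.Theory.
Local Open Scope ring_scope.
Set Implicit Arguments. Unset Strict Implicit. Unset Printing Implicit Defensive.

Section Ideals.
Variable R : comRingType.
Implicit Types (I J P X Y : R -> Prop) (a b x z : R).

Definition incl X Y := forall z, X z -> Y z.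

Lemma ideal0 I : is_ideal I -> I 0. Proof. by case. Qed.

Lemma idealD I a b : is_ideal I -> I a -> I b -> I (a + b).
Proof. by case=> _ H _; apply: H. Qed.

Lemma idealMl I c a : is_ideal I -> I a -> I (c * a).
Proof. by case=> _ _ H; apply: H. Qed.

Lemma idealMr I c a : is_ideal I -> I a -> I (a * c).
Proof. by rewrite mulrC; apply: idealMl. Qed.

Lemma idealB I a b : is_ideal I -> I a -> I b -> I (a - b).
Proof. by move=> HI Ia Ib; rewrite -mulN1r; apply: idealD (idealMl _ HI Ib). Qed.

Lemma ideal_sum I m n F : is_ideal I ->
  (forall i, (m <= i < n)%N -> I (F i)) -> I (\sum_(m <= i < n) F i).
Proof.
move=> HI HF; rewrite big_seq; apply: big_ind => [||i]; first exact: ideal0.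
  by move=> u v; apply: idealD.
by rewrite mem_index_iota => /HF.
Qed.

Lemma ideal_ext I J : (forall z, I z <-> J z) -> is_ideal J -> is_ideal I.
Proof.
move=> E [h0 hD hM]; split; first by apply/E.
- by move=> x y /E hx /E hy; apply/E; apply: hD.
- by move=> a x /E hx; apply/E; apply: hM.
Qed.

Lemma prime_ideal P : is_prime_ideal P -> is_ideal P. Proof. by case. Qed.

Lemma prime1 P : is_prime_ideal P -> ~ P 1. Proof. by case. Qed.

Lemma prime_mul_notin P a b : is_prime_ideal P -> ~ P a -> ~ P b -> ~ P (a * b).
Proof. by case=> _ _ H na nb /H []. Qed.

Lemma prime_expr P a k : is_prime_ideal P -> P (a ^+ k) -> P a.
Proof.
move=> HP; elim: k => [|k IH]; first by rewrite expr0 => /(prime1 HP).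
by rewrite exprS; case: HP => _ _ /[apply] -[|/IH].
Qed.

Lemma ideal_bigmeet (T : Type) (A : T -> R -> Prop) (S : T -> Prop) :
  (forall i, is_ideal (A i)) -> is_ideal (fun z => forall i, S i -> A i z).
Proof.
move=> HA; split => [i _|a b Ha Hb i Si|c a Ha i Si]; first exact: ideal0.
  by apply: idealD; [|apply: Ha|apply: Hb].
by apply: idealMl; [|apply: Ha].
Qed.

Definition meetI X Y z := X z /\ Y z.

Lemma meetI_ideal I J : is_ideal I -> is_ideal J -> is_ideal (meetI I J).
Proof.
move=> HI HJ; split; first by split; apply: ideal0.
- by move=> a b [Ia Ja] [Ib Jb]; split; apply: idealD.
- by move=> c a [Ia Ja]; split; apply: idealMl.
Qed.

Definition sumI X Y z := exists a b, [/\ X a, Y b & z = a + b].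

Lemma sumI_ideal I J : is_ideal I -> is_ideal J -> is_ideal (sumI I J).
Proof.
move=> HI HJ; split.
- by exists 0, 0; rewrite addr0; split => //; apply: ideal0.
- move=> u v [a [b [Ia Jb ->]]] [c [d [Ic Jd ->]]]; exists (a + c), (b + d).
  by split; [apply: idealD|apply: idealD|rewrite addrACA].
- move=> c u [a [b [Ia Jb ->]]]; exists (c * a), (c * b).
  by split; [apply: idealMl|apply: idealMl|rewrite mulrDr].
Qed.

Lemma sumIl I X z : is_ideal I -> X z -> sumI X I z.
Proof. by move=> HI Xz; exists z, 0; rewrite addr0; split => //; apply: ideal0. Qed.

Lemma sumIr I X z : is_ideal I -> X z -> sumI I X z.
Proof. by move=> HI Xz; exists 0, z; rewrite add0r; split => //; apply: ideal0. Qed.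

Lemma sumI_mono X X' Y Y' : incl X X' -> incl Y Y' -> incl (sumI X Y) (sumI X' Y').
Proof. by move=> sX sY z [a [b [Xa Yb ->]]]; exists a, b; split; [apply: sX|apply: sY|]. Qed.

Definition mulI X Y z :=
  forall I, is_ideal I -> (forall a b, X a -> Y b -> I (a * b)) -> I z.

Lemma mulI_ideal X Y : is_ideal (mulI X Y).
Proof.
split=> [I HI _|u v Hu Hv I HI HXY|c u Hu I HI HXY]; first exact: ideal0.
  by apply: idealD; [|apply: Hu|apply: Hv].
by apply: idealMl; [|apply: Hu].
Qed.

Lemma mulI_mul X Y a b : X a -> Y b -> mulI X Y (a * b).
Proof. by move=> Xa Yb I _; apply. Qed.

Lemma mulI_mono X X' Y Y' : incl X X' -> incl Y Y' -> incl (mulI X Y) (mulI X' Y').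
Proof. by move=> sX sY z Hz I HI H; apply: Hz => // a b /sX Xa /sY Yb; apply: H. Qed.

Definition principal x z := exists c, z = c * x.

Lemma principal_ideal x : is_ideal (principal x).
Proof.
split; first by exists 0; rewrite mul0r.
- by move=> a b [c ->] [d ->]; exists (c + d); rewrite mulrDl.
- by move=> c a [d ->]; exists (c * d); rewrite mulrA.
Qed.

Lemma principal_min I x : is_ideal I -> I x -> incl (principal x) I.
Proof. by move=> HI Ix _ [c ->]; apply: idealMl. Qed.

Definition adjoin X x := sumI X (principal x).

Lemma adjoin_ideal I x : is_ideal I -> is_ideal (adjoin I x).
Proof. by move=> HI; apply: sumI_ideal HI (principal_ideal x). Qed.

Lemma adjoinl I x : is_ideal I -> incl I (adjoin I x).
Proof. by move=> HI z Iz; exists z, 0; split => //; [exists 0; rewrite mul0r|rewrite addr0]. Qed.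

Lemma adjoinr I x : is_ideal I -> adjoin I x x.
Proof. by move=> HI; exists 0, x; split; [apply: ideal0|exists 1; rewrite mul1r|rewrite add0r]. Qed.

Lemma adjoin_min I J x : is_ideal J -> incl I J -> J x -> incl (adjoin I x) J.
Proof.
by move=> HJ sIJ Jx _ [a [b [/sIJ Ja /(principal_min HJ Jx) Jb ->]]]; apply: idealD.
Qed.

Definition span n (g : nat -> R) z := exists c : nat -> R, z = \sum_(0 <= i < n) c i * g i.

Lemma span_ideal n g : is_ideal (span n g).
Proof.
split.
- by exists (fun _ => 0); rewrite big1 // => i _; rewrite mul0r.
- move=> x y [c ->] [d ->]; exists (fun i => c i + d i); rewrite -big_split /=.
  by apply: eq_bigr => i _; rewrite mulrDl.
- move=> a x [c ->]; exists (fun i => a * c i); rewrite mulr_sumr.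
  by apply: eq_bigr => i _; rewrite mulrA.
Qed.

Lemma span_gen n g i : (i < n)%N -> span n g (g i).
Proof.
move=> hi; exists (fun j => (j == i)%:R).
rewrite (bigD1_seq i) ?mem_iota ?iota_uniq ?add0n ?subn0 //= eqxx mul1r big1 ?addr0 //.
by move=> j /negbTE ->; rewrite mul0r.
Qed.

Lemma span_min I n g : is_ideal I -> (forall i, (i < n)%N -> I (g i)) -> incl (span n g) I.
Proof.
by move=> HI Hg z [c ->]; apply: ideal_sum => // i /andP[_ /Hg]; apply: idealMl.
Qed.

Lemma span_incr n g : incl (span n g) (span n.+1 g).
Proof.
move=> z [c ->]; exists (fun i => if (i < n)%N then c i else 0).
rewrite big_nat_recr //= ltnn mul0r addr0.
by apply: eq_big_nat => i /andP[_ ->].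
Qed.

Lemma prime_avoidance (T : finType) q (A : T -> R -> Prop) :
  is_prime_ideal q -> (forall i, is_ideal (A i)) -> (forall i, ~ incl (A i) q) ->
  exists z, (forall i, A i z) /\ ~ q z.
Proof.
move=> Hq HA HAq.
have /ClassicalEpsilon.choice [f Hf] : forall i, exists z, A i z /\ ~ q z.
  move=> i; apply: NNPP => H; apply: (HAq i) => z Az.
  by apply: NNPP => nqz; apply: H; exists z.
exists (\prod_i f i); split => [i|].
  by rewrite (bigD1 i) //=; apply: idealMr (Hf i).1.
apply: (big_ind (fun z => ~ q z)) => [|u v|i _]; first exact: prime1.
  exact: prime_mul_notin.
exact: (Hf i).2.
Qed.

End Ideals.

Section Noetherian.
Variable R : comRingType.
Implicit Types (I J X : R -> Prop) (x z : R).
Hypothesis HN : noetherian R.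

Lemma noetherian_maximal (F : (R -> Prop) -> Prop) I0 :
  (forall I, F I -> is_ideal I) -> F I0 ->
  exists I, F I /\ forall J, F J -> incl I J -> incl J I.
Proof.
move=> Fid F0; apply: NNPP => nomax.
have /ClassicalEpsilon.choice [next Hnext] : forall S : {I | F I}, exists T : {I | F I},
    incl (sval S) (sval T) /\ exists z, sval T z /\ ~ sval S z.
  move=> [I FI]; apply: NNPP => nonext; apply: nomax.
  exists I; split => // J FJ sIJ z Jz; apply: NNPP => nIz; apply: nonext.
  by exists (exist _ J FJ); split => //; exists z.
pose chain k := sval (iter k next (exist _ I0 F0)).
have [n Hn] := HN (I := chain) (fun k => Fid _ (svalP _))
   (fun k => (Hnext (iter k next (exist _ I0 F0))).1).
have [_ [z [h1 h2]]] := Hnext (iter n next (exist _ I0 F0)).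
by apply/h2/(Hn n.+1 (leqnSn n)).
Qed.

Lemma noetherian_fg I : is_ideal I -> exists n g, forall z, I z <-> span n g z.
Proof.
move=> HI.
pose F J := exists n g, (forall i, (i < n)%N -> I (g i)) /\ forall z, J z <-> span n g z.
have Fid J : F J -> is_ideal J.
  by move=> [n [g [_ E]]]; apply: ideal_ext E _; apply: span_ideal.
have F0 : F (span 0 (fun _ => 0)) by exists 0%N, (fun _ => 0); split.
have [J [[n [g [Hg E]]] Jmax]] := noetherian_maximal Fid F0.
exists n, g => z; split=> [Iz|]; last exact: span_min.
apply/E; apply: NNPP => nJz.
pose g' i := if i == n then z else g i.
have FJ' : F (span n.+1 g').
  exists n.+1, g'; split => // i; rewrite ltnS leq_eqVlt /g'.
  by case: eqP => [//|_] /= /Hg.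
apply/nJz/(Jmax _ FJ'); last by have := span_gen g' (ltnSn n); rewrite /g' eqxx.
move=> w /E [c ->]; exists (fun i => if i == n then 0 else c i).
rewrite big_nat_recr //= eqxx mul0r addr0; apply: eq_big_nat => i /andP[_ hi].
by rewrite /g' (ltn_eqF hi).
Qed.

Definition radical_cover I n (P : nat -> R -> Prop) :=
  (forall i, (i < n)%N -> is_prime_ideal (P i) /\ incl I (P i)) /\
  forall z, (forall i, (i < n)%N -> P i z) -> exists k, I (z ^+ k).

Lemma radical_cover_cat I n1 n2 (P1 P2 : nat -> R -> Prop) a b :
  is_ideal I -> I (a * b) ->
  radical_cover (adjoin I a) n1 P1 -> radical_cover (adjoin I b) n2 P2 ->
  radical_cover I (n1 + n2) (fun i => if (i < n1)%N then P1 i else P2 (i - n1)%N).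
Proof.
move=> HI Iab [P1pr P1rad] [P2pr P2rad]; split=> [i hi|z Hz].
  case: ifP => h.
    by have [pr s] := P1pr i h; split => // z /(adjoinl a HI) /s.
  have /P2pr [pr s] : (i - n1 < n2)%N by rewrite ltn_subLR // leqNgt h.
  by split => // z /(adjoinl b HI) /s.
have [k1 [u1 [_ [Iu1 [c1 ->] e1]]]] : exists k, adjoin I a (z ^+ k).
  by apply: P1rad => i hi; have := Hz i; rewrite hi; apply; exact: ltn_addr.
have [k2 [u2 [_ [Iu2 [c2 ->] e2]]]] : exists k, adjoin I b (z ^+ k).
  apply: P2rad => i hi; have := Hz (n1 + i)%N.
  have -> : (n1 + i < n1)%N = false by rewrite ltnNge leq_addr.
  by rewrite ltn_add2l addKn; apply.
exists (k1 + k2)%N; rewrite exprD e1 e2.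
have -> : (u1 + c1 * a) * (u2 + c2 * b) =
    u1 * (u2 + c2 * b) + c1 * a * u2 + c1 * c2 * (a * b) by ring.
by apply: idealD; [|apply: idealD; [|apply: idealMr|apply: idealMl]|apply: idealMl].
Qed.

(* Noetherian induction: a maximal ideal without a radical cover is prime. *)
Lemma radical_cover_exists I : is_ideal I -> exists n P, radical_cover I n P.
Proof.
move=> HI; apply: NNPP => Hn.
pose F J := is_ideal J /\ ~ exists n P, radical_cover J n P.
have [J [[HJ nJ] Jmax]] := noetherian_maximal (fun J (h : F J) => h.1) (conj HI Hn).
apply: nJ; have [J1|nJ1] := classic (J 1).
  by exists 0%N, (fun _ _ => True); split => // z _; exists 0%N; rewrite expr0.
have [pJ|npJ] := classic (is_prime_ideal J).
  exists 1%N, (fun _ => J); split; first by move=> i _; split.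
  by move=> z /(_ 0%N isT) Jz; exists 1%N; rewrite expr1.
have [a [b [Jab nJa nJb]]] : exists a b, [/\ J (a * b), ~ J a & ~ J b].
  apply: NNPP => H; apply: npJ; split => // a b Jab.
  by apply: NNPP => /not_or_and [na nb]; apply: H; exists a, b.
have cover c : ~ J c -> exists n P, radical_cover (adjoin J c) n P.
  move=> nJc; apply: NNPP => nD.
  have := Jmax (adjoin J c) (conj (adjoin_ideal c HJ) nD) (adjoinl c HJ).
  by move/(_ c (adjoinr c HJ)).
have [n1 [P1 C1]] := cover a nJa; have [n2 [P2 C2]] := cover b nJb.
by exists (n1 + n2)%N; eexists; apply: radical_cover_cat C1 C2.
Qed.

Lemma radical_cover_below I n P q : radical_cover I n P -> is_prime_ideal q -> incl I q ->
  exists2 i, (i < n)%N & incl (P i) q.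
Proof.
move=> [Ppr Prad] Hq sIq; apply: NNPP => H.
have [z [Hz nqz]] := @prime_avoidance _ 'I_n q (fun i => P i) Hq
  (fun i => prime_ideal (Ppr i (ltn_ord i)).1) (fun i s => H (ex_intro2 _ _ (val i) (ltn_ord i) s)).
have [k Ik] := Prad z (fun i hi => Hz (Ordinal hi)).
by apply/nqz/(prime_expr Hq)/sIq/Ik.
Qed.

Lemma finite_family_minimal n (P : nat -> R -> Prop) X :
  exists Y, [/\ Y = X \/ (exists2 i, (i < n)%N & Y = P i), incl Y X &
    forall i, (i < n)%N -> incl (P i) Y -> incl Y (P i)].
Proof.
elim: n X => [|n IH] X; first by exists X; split => //; left.
have [Y [HY sYX Ymin]] := IH X.
have [[sPY nsYP]|] := classic (incl (P n) Y /\ ~ incl Y (P n)).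
  have [Y' [HY' sY'P Y'min]] := IH (P n).
  exists Y'; split=> [|z /sY'P /sPY /sYX //|i].
    right; case: HY' => [->|[i hi ->]]; first by exists n.
    by exists i => //; apply: ltnW.
  by rewrite ltnS leq_eqVlt => /predU1P [->|/Y'min].
move=> notlt; exists Y; split => // [|i].
  by case: HY => [->|[i hi ->]]; [left|right; exists i => //; apply: ltnW].
rewrite ltnS leq_eqVlt => /predU1P [->|/Ymin //] sPY.
by apply: NNPP => nsYP; apply: notlt.
Qed.

Lemma minimal_prime_below I q : is_ideal I -> is_prime_ideal q -> incl I q ->
  exists r, [/\ is_prime_ideal r, incl I r, incl r q &
    forall P, is_prime_ideal P -> incl I P -> incl P r -> incl r P].
Proof.
move=> HI Hq sIq; have [n [P C]] := radical_cover_exists HI.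
have [i0 hi0 si0] := radical_cover_below C Hq sIq.
have [Y [HY sYi0 Ymin]] := finite_family_minimal n P (P i0).
have [j hj eY] : exists2 j, (j < n)%N & Y = P j.
  by case: HY => [->|[j hj ->]]; [exists i0|exists j].
subst Y.
have [Pjpr sIPj] := C.1 j hj.
exists (P j); split => // [z /sYi0 /si0 //|P' HP' sIP' sP'j].
have [l hl sl] := radical_cover_below C HP' sIP'.
by move=> z /(Ymin l hl (fun w h => sP'j _ (sl _ h))) /sl.
Qed.

End Noetherian.

Section Saturation.
Variable R : comRingType.
Implicit Types (m X Y : R -> Prop).

(* [saturation m X] is the contraction of the localization of X at the prime m. *)
Definition saturation m X z := exists2 s, ~ m s & X (s * z).

Definition saturated m X := forall s z, ~ m s -> X (s * z) -> X z.

Lemma saturation_ideal m X : is_prime_ideal m -> is_ideal X -> is_ideal (saturation m X).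
Proof.
move=> Hm HX; split.
- by exists 1; [apply: prime1|rewrite mulr0; apply: ideal0].
- move=> a b [s ns Xa] [t nt Xb]; exists (s * t); first exact: prime_mul_notin.
  rewrite mulrDr; apply: idealD => //; first by rewrite mulrAC; apply: idealMr.
  by rewrite -mulrA; apply: idealMl.
- by move=> c a [s ns Xa]; exists s => //; rewrite mulrCA; apply: idealMl.
Qed.

Lemma saturation_incl m X : is_prime_ideal m -> incl X (saturation m X).
Proof. by move=> Hm z Xz; exists 1; rewrite ?mul1r //; apply: prime1. Qed.

Lemma saturation_saturated m X : is_prime_ideal m -> saturated m (saturation m X).
Proof.
move=> Hm s z ns [t nt Xz]; exists (t * s); first exact: prime_mul_notin.
by rewrite -mulrA.
Qed.

Lemma saturated_saturation m X : saturated m X -> incl (saturation m X) X.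
Proof. by move=> satX z [s ns Xz]; apply: satX Xz. Qed.

Lemma saturation_mono m X Y : incl X Y -> incl (saturation m X) (saturation m Y).
Proof. by move=> sXY z [s ns Xz]; exists s => //; apply: sXY. Qed.

Lemma saturated_le m m' X : incl m m' -> saturated m X -> saturated m' X.
Proof. by move=> smm' satX s z nm's; apply: satX => /smm'. Qed.

Lemma prime_saturated P m : is_prime_ideal P -> incl P m -> saturated m P.
Proof. by case=> _ _ Pmul sPm s z nms /Pmul [/sPm|]. Qed.

Definition decreasing (K : nat -> R -> Prop) := forall n, incl (K n.+1) (K n).

Definition stationary (K : nat -> R -> Prop) :=
  exists N, forall n, (N <= n)%N -> incl (K N) (K n).

Lemma decreasing_le K (n k : nat) : decreasing K -> (n <= k)%N -> incl (K k) (K n).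
Proof.
move=> decK /subnK <-; elim: (k - n)%N => [//|j IH] z.
by rewrite addSn => /decK /IH.
Qed.

Lemma stationary_no_strict_descent K :
  (forall (sg : nat -> nat) (v : nat -> R), (forall k, sg k <= sg k.+1)%N ->
     (forall k, K (sg k) (v k) /\ ~ K (sg k.+1) (v k)) -> False) -> stationary K.
Proof.
move=> nodesc; apply: NNPP => nstat.
have /ClassicalEpsilon.choice [f Hf] :
    forall N, exists w : nat * R, [/\ N <= w.1, K N w.2 & ~ K w.1 w.2]%N.
  move=> N; apply: NNPP => h; apply: nstat; exists N => n hn z Kz.
  by apply: NNPP => nKz; apply: h; exists (n, z).
pose sg k := iter k (fun N => (f N).1) 0%N.
by apply: (nodesc sg (fun k => (f (sg k)).2)) => k; case: (Hf (sg k)).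
Qed.

End Saturation.

(* Between saturated ideals B and B' with r B' in B, every chain of saturated ideals
   is stationary: B'/B is a finite-dimensional vector space over the residue field at r. *)
Section FiniteLength.
Variable R : comRingType.
Hypothesis HN : noetherian R.
Variables (r B B' : R -> Prop) (K : nat -> R -> Prop) (v : nat -> R).
Hypotheses (Hr : is_prime_ideal r) (HB : is_ideal B) (satB : saturated r B).
Hypothesis rB'B : forall y z, r y -> B' z -> B (y * z).
Hypothesis HK :
  forall n, [/\ is_ideal (K n), saturated r (K n), incl B (K n) & incl (K n) B'].
Hypothesis decK : decreasing K.
Hypothesis Hv : forall n, K n (v n) /\ ~ K n.+1 (v n).

Lemma strict_descent_partial_sums N s b c :
  ~ r s -> B b -> s * v N = b + \sum_(0 <= i < N) c i * v i ->
  forall j, (j <= N)%N -> B (\sum_(0 <= i < j) c i * v i).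
Proof.
move=> nrs Bb e; elim => [|j IH] hj; first by rewrite big_geq //; apply: ideal0.
rewrite big_nat_recr //=; apply: idealD => //; first exact/IH/ltnW.
have [rcj|nrcj] := classic (r (c j)).
  by apply: rB'B rcj _; have [_ _ _] := HK j; apply; exact: (Hv j).1.
exfalso; apply: (Hv j).2; have [HKj satKj BKj _] := HK j.+1.
apply: (satKj (c j)) => //.
have -> : c j * v j = s * v N - b - \sum_(0 <= i < j) c i * v i -
    \sum_(j.+1 <= i < N) c i * v i.
  by rewrite e (@big_cat_nat _ _ _ j _ N) ?(ltnW hj) //= (@big_ltn _ _ _ j) //; ring.
apply: (idealB HKj); last first.
  apply: ideal_sum => // i /andP[hji _]; apply: idealMl => //.
  exact: decreasing_le decK hji _ (Hv i).1.
apply: (idealB HKj); last exact/BKj/IH/ltnW.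
apply: (idealB HKj); last exact: BKj.
by apply: idealMl => //; exact: decreasing_le decK hj _ (Hv N).1.
Qed.

Lemma no_strict_saturated_descent : False.
Proof.
pose W n := saturation r (sumI B (span n v)).
have HW n : is_ideal (W n) by apply/saturation_ideal/sumI_ideal/span_ideal.
have incrW n : incl (W n) (W n.+1).
  by apply/saturation_mono/sumI_mono => // z; apply: span_incr.
have [N HN'] := HN HW incrW.
have [s nrs [b [_ [Bb [c ->] e]]]] : W N (v N).
  apply/(HN' N.+1 (leqnSn N))/saturation_incl/sumIr => //.
  exact: span_gen.
apply: (Hv N).2; have [_ _ BK _] := HK N.+1; apply/BK/(satB nrs).
by rewrite e; apply: idealD => //; apply: strict_descent_partial_sums e _ _.
Qed.

End FiniteLength.

(* For r minimal over p + (x), the ring R_r / (p + (x)) is Artinian: the colon ideals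
   (base : r^i) exhaust R, and each layer has finite length. *)
Section Artinian.
Variable R : comRingType.
Hypothesis HN : noetherian R.
Variables (p r : R -> Prop) (x : R).
Hypotheses (Hp : is_prime_ideal p) (Hr : is_prime_ideal r).
Hypothesis rmin :
  forall P, is_prime_ideal P -> incl (adjoin p x) P -> incl P r -> incl r P.

Let base := saturation r (adjoin p x).

Fixpoint colon_pow i : R -> Prop :=
  if i is i.+1 then fun z => forall y, r y -> colon_pow i (y * z) else base.

Lemma base_ideal : is_ideal base.
Proof. exact: saturation_ideal Hr (adjoin_ideal x (prime_ideal Hp)). Qed.

Lemma colon_pow_ideal i : is_ideal (colon_pow i).
Proof.
elim: i => [|i IH] /=; first exact: base_ideal.
split=> [y _|a b Ha Hb y ry|c a Ha y ry]; first by rewrite mulr0; apply: ideal0.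
  by rewrite mulrDr; apply: idealD; [|apply: Ha|apply: Hb].
by rewrite mulrCA; apply: (idealMl _ IH); apply: Ha.
Qed.

Lemma colon_pow_saturated i : saturated r (colon_pow i).
Proof.
elim: i => [|i IH] /=; first exact: saturation_saturated.
by move=> s z ns H y ry; apply: (IH s) => //; rewrite mulrCA; apply: H.
Qed.

Lemma colon_pow_incr i : incl (colon_pow i) (colon_pow i.+1).
Proof.
elim: i => [|i IH] /= z Hz y ry; first exact: idealMl base_ideal Hz.
by apply/IH/Hz.
Qed.

Lemma base_colon_pow i : incl base (colon_pow i).
Proof. by elim: i => [|i IH] //= z /IH; apply: colon_pow_incr. Qed.

(* A maximal annihilator (A : a) is prime; by minimality of r it equals r. *)
Lemma saturated_annihilated A : is_ideal A -> saturated r A -> incl (adjoin p x) A ->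
  ~ A 1 -> exists a, ~ A a /\ forall y, r y -> A (y * a).
Proof.
move=> HA satA pxA nA1.
pose F J := exists a, ~ A a /\ forall z, J z <-> A (z * a).
have colon_ideal a : is_ideal (fun z => A (z * a)).
  split=> [|u v Hu Hv|c u Hu]; first by rewrite mul0r; apply: ideal0.
    by rewrite mulrDl; apply: idealD.
  by rewrite -mulrA; apply: idealMl.
have Fid J : F J -> is_ideal J by move=> [a [_ E]]; apply: ideal_ext E _.
have FA : F A by exists 1; split => // z; rewrite mulr1.
have [J [[a [nAa E]] Jmax]] := noetherian_maximal HN Fid FA.
have pJ : is_prime_ideal J.
  split; [exact/Fid/(ex_intro _ a (conj nAa E))|by move/E; rewrite mul1r|].
  move=> b c /E Abca; apply: NNPP => /not_or_and [nJb nJc]; apply: nJc.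
  have nAba : ~ A (b * a) by move=> h; apply/nJb/E.
  have FJ' : F (fun z => A (z * (b * a))) by exists (b * a); split.
  apply: (Jmax _ FJ'); last by rewrite mulrA [c * b]mulrC.
  by move=> z /E Jz; rewrite mulrA [z * b]mulrC -mulrA; apply: idealMl.
have sJr : incl J r by move=> z /E Az; apply: NNPP => nz; apply/nAa/(satA z).
have spxJ : incl (adjoin p x) J by move=> z /pxA Az; apply/E; apply: idealMr HA Az.
by exists a; split => // y /(rmin pJ spxJ sJr) /E.
Qed.

Lemma colon_pow_full : exists k, forall z, colon_pow k z.
Proof.
have [k Hk] := HN colon_pow_ideal (fun k => @colon_pow_incr k).
exists k; apply: NNPP => /not_all_ex_not [z nz].
have nk1 : ~ colon_pow k 1.
  by move=> h; apply: nz; rewrite -[z]mulr1; apply: idealMl h; apply: colon_pow_ideal.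
have [a [na Ha]] := saturated_annihilated (colon_pow_ideal k) (@colon_pow_saturated k)
  (fun z h => base_colon_pow k (saturation_incl Hr h)) nk1.
by apply/na/(Hk k.+1 (leqnSn k)).
Qed.

Section DescendingChain.
Variable J : nat -> R -> Prop.
Hypothesis HJ : forall n, [/\ is_ideal (J n), saturated r (J n) & incl base (J n)].
Hypothesis decJ : decreasing J.

Let layer i n := saturation r (sumI (meetI (J n) (colon_pow i.+1)) (colon_pow i)).

Lemma layer_decreasing i : decreasing (layer i).
Proof.
by move=> n; apply/saturation_mono/sumI_mono => // z [Jz Cz]; split => //; apply: decJ.
Qed.

Lemma layer_stationary i : stationary (layer i).
Proof.
have Hlayer n : [/\ is_ideal (layer i n), saturated r (layer i n),
    incl (colon_pow i) (layer i n) & incl (layer i n) (colon_pow i.+1)].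
  have [HJn _ _] := HJ n; split.
  - by apply/saturation_ideal/sumI_ideal/colon_pow_ideal/meetI_ideal/colon_pow_ideal.
  - exact: saturation_saturated.
  - by move=> z Cz; apply/saturation_incl/sumIr/Cz/meetI_ideal/colon_pow_ideal.
  - move=> z Hz; apply: (saturated_saturation (@colon_pow_saturated i.+1)).
    move: Hz; apply: saturation_mono => _ [a [b [[_ Ca] /colon_pow_incr Cb ->]]].
    exact: idealD (colon_pow_ideal _) Ca Cb.
apply: stationary_no_strict_descent => sg v incr_sg strict.
apply: (no_strict_saturated_descent HN Hr (colon_pow_ideal i) (@colon_pow_saturated i)
  (B' := colon_pow i.+1) _ (fun n => Hlayer (sg n)) _ strict) => [y z ry|k]; first exact.
exact: decreasing_le (@layer_decreasing i) (incr_sg k).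
Qed.

Lemma stationary_colon_succ i : stationary (fun n => meetI (J n) (colon_pow i)) ->
  stationary (fun n => meetI (J n) (colon_pow i.+1)).
Proof.
move=> [N1 stat1]; have [N2 stat2] := layer_stationary i; set N := maxn N1 N2.
exists N => n hn z [Jz Cz]; split => //.
have [HJN _ _] := HJ N; have [HJn satJn _] := HJ n.
have [s ns [a [b [[Ja _] Cb e]]]] : layer i n z.
  apply: stat2 (leq_trans (leq_maxr _ _) hn) _ _.
  apply: (decreasing_le (@layer_decreasing i) (leq_maxr N1 N2)).
  by apply: (saturation_incl Hr); apply: sumIl (colon_pow_ideal i) _.
have JNb : J N b.
  have -> : b = s * z - a by rewrite e; ring.
  exact: idealB HJN (idealMl _ HJN Jz) (decreasing_le decJ hn Ja).
have [Jnb _] := stat1 n (leq_trans (leq_maxl _ _) hn) b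
  (conj (decreasing_le decJ (leq_maxl N1 N2) JNb) Cb).
by apply: (satJn s) => //; rewrite e; apply: idealD.
Qed.

Lemma saturated_dcc : stationary J.
Proof.
have [k Ck] := colon_pow_full.
suff [N statN] : stationary (fun n => meetI (J n) (colon_pow k)).
  by exists N => n hn z Jz; have [] := statN n hn z (conj Jz (Ck z)).
elim: k {Ck} => [|i]; last exact: stationary_colon_succ.
by exists 0%N => n _ z [_ Bz]; split => //; have [_ _] := HJ n; apply.
Qed.

End DescendingChain.
End Artinian.

Section Nakayama.
Variable R : comRingType.
Variables (m J L : R -> Prop).
Hypotheses (Hm : is_prime_ideal m) (HJ : is_ideal J) (sJm : incl J m) (HL : is_ideal L).

Definition plus_span n (g : nat -> R) z := exists a (c : nat -> R),
  [/\ L a, forall j, J (c j) & z = a + \sum_(0 <= j < n) c j * g j].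

Lemma plus_span_ideal n g : is_ideal (plus_span n g).
Proof.
split.
- exists 0, (fun _ => 0); split=> [|_|]; [exact: ideal0|exact: ideal0|].
  by rewrite add0r big1 // => j _; rewrite mul0r.
- move=> u v [a [c [La Jc ->]]] [b [d [Lb Jd ->]]].
  exists (a + b), (fun j => c j + d j); split=> [|j|]; [exact: idealD|exact: idealD|].
  by rewrite addrACA -big_split /=; congr (_ + _); apply: eq_bigr => j _; ring.
- move=> e u [a [c [La Jc ->]]]; exists (e * a), (fun j => e * c j).
  split=> [|j|]; [exact: idealMl|exact: idealMl|].
  by rewrite mulrDr mulr_sumr; congr (_ + _); apply: eq_bigr => j _; ring.
Qed.

Lemma plus_span_saturation n g : (forall j, (j < n)%N -> saturation m L (g j)) ->
  incl (plus_span n g) (saturation m L).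
Proof.
move=> Hg _ [a [c [La _ ->]]]; have HsL := saturation_ideal Hm HL.
apply: idealD (saturation_incl Hm La) _ => //.
by apply: ideal_sum => // j /andP[_ /Hg]; apply: idealMl.
Qed.

(* In t g_n = a + ... + c_n g_n the coefficient c_n lies in J, inside m, so t - c_n is
   still outside m. *)
Lemma plus_span_last n g : saturation m (plus_span n.+1 g) (g n) ->
  exists2 u, ~ m u & plus_span n g (u * g n).
Proof.
move=> [t nt [a [c [La Jc e]]]]; exists (t - c n).
  move=> mu; apply: nt; rewrite -(subrK (c n) t).
  exact: idealD (prime_ideal Hm) mu (sJm (Jc n)).
exists a, c; split => //.
by rewrite mulrBl e big_nat_recr //=; ring.
Qed.

Lemma plus_span_drop_last n g u : ~ m u -> plus_span n g (u * g n) ->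
  incl (saturation m (plus_span n.+1 g)) (saturation m (plus_span n g)).
Proof.
move=> nu Pun z [t nt [a [c [La Jc e]]]]; exists (u * t); first exact: prime_mul_notin.
have Hspan := plus_span_ideal n g.
have -> : u * t * z = u * (a + \sum_(0 <= j < n) c j * g j) + c n * (u * g n).
  by rewrite -[u * t * z]mulrA e big_nat_recr //=; ring.
apply: (idealD Hspan); last exact: idealMl.
by apply: idealMl => //; exists a, c.
Qed.

Lemma nakayama_span n g : (forall i, (i < n)%N -> saturation m (plus_span n g) (g i)) ->
  forall i, (i < n)%N -> saturation m L (g i).
Proof.
elim: n => [//|n IH] Hg.
have [u nu Pun] := plus_span_last (Hg n (ltnSn n)).
have Hlow i : (i < n)%N -> saturation m L (g i).
  by apply: IH => j hj; apply/(plus_span_drop_last nu Pun)/Hg/ltnW.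
move=> i; rewrite ltnS leq_eqVlt => /predU1P [->|/Hlow //].
exact: saturation_saturated nu (plus_span_saturation Hlow Pun).
Qed.

Lemma nakayama M : noetherian R -> is_ideal M ->
  incl M (saturation m (sumI L (mulI J M))) -> incl M (saturation m L).
Proof.
move=> HN HM sM; have [n [g EM]] := noetherian_fg HN HM.
have Hspan := plus_span_ideal n g.
have sLJM : incl (sumI L (mulI J M)) (plus_span n g).
  move=> _ [a [b [La JMb ->]]]; apply: idealD => //.
    exists a, (fun _ => 0); split=> [|_|] //; first exact: ideal0.
    by rewrite big1 ?addr0 // => j _; rewrite mul0r.
  apply: JMb => // c w Jc /EM [d ->]; exists 0, (fun j => c * d j).
  split=> [|j|]; [exact: ideal0|exact: idealMr|].
  by rewrite add0r mulr_sumr; apply: eq_bigr => j _; rewrite mulrA.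
move=> z /EM; apply: span_min; first exact: saturation_ideal.
apply: nakayama_span => i hi; apply: saturation_mono sLJM _ _.
by apply/sM/EM/span_gen.
Qed.

End Nakayama.

Section PrincipalIdealTheorem.
Variable R : comRingType.
Hypothesis HN : noetherian R.
Variables (p Q r : R -> Prop) (x : R).
Hypotheses (Hp : is_prime_ideal p) (HQ : is_prime_ideal Q) (Hr : is_prime_ideal r).
Hypotheses (spQ : incl p Q) (sQr : incl Q r) (rx : r x) (nQx : ~ Q x).
Hypothesis rmin :
  forall P, is_prime_ideal P -> incl (adjoin p x) P -> incl P r -> incl r P.

(* [Qpow n] is p + Q^n, and [Qsymb n] its Q-saturation, the n-th symbolic power of Q
   modulo p. *)
Fixpoint Qpow n : R -> Prop := if n is n.+1 then sumI p (mulI Q (Qpow n)) else fun=> True.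

Let Qsymb n := saturation Q (Qpow n).

Lemma Qpow_ideal n : is_ideal (Qpow n).
Proof. by case: n => [|n] /=; [split|apply: sumI_ideal (prime_ideal Hp) (mulI_ideal _ _)]. Qed.

Lemma Qpow_decreasing : decreasing Qpow.
Proof. by elim=> [//|n IH] /=; apply: sumI_mono => //; apply: mulI_mono. Qed.

Lemma Qpow_expr n a : Q a -> Qpow n (a ^+ n).
Proof.
move=> Qa; elim: n => [//|n IH]; rewrite exprS.
exact: sumIr (prime_ideal Hp) (mulI_mul Qa IH).
Qed.

Lemma Qsymb_ideal n : is_ideal (Qsymb n).
Proof. exact: saturation_ideal HQ (Qpow_ideal n). Qed.

Lemma p_Qsymb n : incl p (Qsymb n).
Proof.
move=> z pz; apply: saturation_incl HQ _ _.
by case: n => [|n] //=; apply: sumIl (mulI_ideal _ _) pz.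
Qed.

(* The chain of the saturation r (Qsymb n + (x)) is stationary (R_r/(p + (x)) is
   Artinian), and Nakayama over the ideal (x) turns this into Qsymb N = Qsymb N.+1. *)
Lemma Qsymb_stationary : exists N, incl (Qsymb N) (Qsymb N.+1).
Proof.
pose C n := saturation r (adjoin (Qsymb n) x).
have HC n : [/\ is_ideal (C n), saturated r (C n) & incl (saturation r (adjoin p x)) (C n)].
  split; [exact/saturation_ideal/adjoin_ideal/Qsymb_ideal|exact: saturation_saturated|].
  by apply/saturation_mono/sumI_mono => //; apply: p_Qsymb.
have decC : decreasing C.
  by move=> n; apply/saturation_mono/sumI_mono => //; apply/saturation_mono/Qpow_decreasing.
have [N statN] := saturated_dcc HN Hp Hr rmin HC decC.
exists N => z symbNz.
have satQr : saturated r (Qsymb N.+1).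
  exact: saturated_le sQr (saturation_saturated HQ).
apply: saturated_saturation satQr _ _.
apply: (nakayama Hr (principal_ideal x) (principal_min (prime_ideal Hr) rx)
  (Qsymb_ideal N.+1) HN (Qsymb_ideal N)) symbNz => w symbNw.
have [t nt [b [_ [symbb [c ->] e]]]] :=
  statN N.+1 (leqnSn N) w (saturation_incl Hr (adjoinl x (Qsymb_ideal N) symbNw)).
exists t => //; rewrite e; exists b, (c * x); split => //.
rewrite [c * x]mulrC; apply: mulI_mul; first by exists 1; rewrite mul1r.
apply: (saturation_saturated HQ nQx).
have -> : x * c = t * w - b by rewrite e; ring.
apply: (idealB (Qsymb_ideal N)); first exact: idealMl (Qsymb_ideal N) symbNw.
by move: symbb; apply: saturation_mono; apply: Qpow_decreasing.
Qed.

Lemma Qsymb_stationary_incl N : incl (Qsymb N) (Qsymb N.+1) -> incl (Qsymb N) p.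
Proof.
move=> statN z symbNz.
apply: (saturated_saturation (prime_saturated Hp spQ)).
apply: (nakayama HQ (prime_ideal HQ) (fun w h => h) (prime_ideal Hp) HN (Qsymb_ideal N)) symbNz.
move=> w /statN [s ns /= Pw]; exists s => //.
by move: Pw; apply: sumI_mono => //; apply: mulI_mono => // v; apply: saturation_incl.
Qed.

Theorem principal_ideal_theorem : incl Q p.
Proof.
have [N statN] := Qsymb_stationary.
by move=> a /(Qpow_expr N) /(saturation_incl HQ) /(Qsymb_stationary_incl statN) /(prime_expr Hp).
Qed.

End PrincipalIdealTheorem.

Section SpecOrder.
Variable R : comRingType.
Hypothesis HN : noetherian R.
Implicit Types p q r : Spec R.

Definition covers p q := prime_lt p q /\ forall r, ~ (prime_lt p r /\ prime_lt r q).

Lemma prime_lt_of_le p q : prime_le p q -> ~ prime_le q p -> prime_lt p q.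
Proof.
move=> lepq nleqp; split => //; apply: NNPP => nwit; apply: nleqp => z qz.
by apply: NNPP => npz; apply: nwit; exists z.
Qed.

Lemma prime_lt_not_ge p q : prime_lt p q -> ~ prime_le q p.
Proof. by move=> [_ [z [qz npz]]] leqp; apply/npz/leqp. Qed.

(* Krull's principal ideal theorem: a prime r minimal over p + (x) covers p. *)
Lemma exists_cover_below p q : prime_lt p q -> exists2 r, covers p r & prime_le r q.
Proof.
case: p q => [P HP] [Q HQ] [/= sPQ [x [Qx nPx]]].
have [r [Hr sPxr srQ rmin]] := minimal_prime_below HN
  (adjoin_ideal x (prime_ideal HP)) HQ (adjoin_min (prime_ideal HQ) sPQ Qx).
have rx := sPxr _ (adjoinr x (prime_ideal HP)).
exists (exist _ r Hr) => //; split.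
  by split=> [z /(adjoinl x (prime_ideal HP)) /sPxr|]; last exists x.
move=> [S HS] [[/= sPS [y [Sy nPy]]] [sSr [w [rw nSw]]]].
have nSx : ~ S x.
  by move=> Sx; apply/nSw/(rmin S HS (adjoin_min (prime_ideal HS) sPS Sx) sSr).
by apply/nPy/(principal_ideal_theorem HN HP HS Hr sPS sSr rx nSx rmin).
Qed.

Lemma spec_maximal (F : Spec R -> Prop) p0 : F p0 ->
  exists p, F p /\ forall p', F p' -> prime_le p p' -> prime_le p' p.
Proof.
case: p0 => P0 HP0 F0.
pose G I := exists HI : is_prime_ideal I, F (exist _ I HI).
have Gid I : G I -> is_ideal I by move=> [HI _]; apply: prime_ideal.
have [I [[HI FI] Imax]] := noetherian_maximal HN Gid (ex_intro _ HP0 F0).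
by exists (exist _ I HI); split => // [[I' HI']] F' le; apply: Imax => //; exists HI'.
Qed.

(* Induction along covers: a maximal counterexample below q would be covered inside [p, q]. *)
Lemma cover_induction (G : Spec R -> Prop) q :
  (forall p, prime_le p q -> prime_le q p -> G p) ->
  (forall p r, covers p r -> prime_le r q -> G r -> G p) ->
  forall p, prime_le p q -> G p.
Proof.
move=> base step p0 le0; apply: NNPP => nG0.
have [p [[lepq nGp] pmax]] :=
  spec_maximal (F := fun p => prime_le p q /\ ~ G p) (conj le0 nG0).
have [leqp|nleqp] := classic (prime_le q p); first exact/nGp/base.
have [r covr lerq] := exists_cover_below (prime_lt_of_le lepq nleqp).
apply/nGp/(step p r covr lerq); apply: NNPP => nGr.
exact: prime_lt_not_ge covr.1 (pmax r (conj lerq nGr) covr.1.1).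
Qed.

Definition specialization_closed (X : Spec R -> Prop) :=
  forall p q, X p -> prime_le p q -> X q.
Definition generalization_closed (X : Spec R -> Prop) :=
  forall p q, prime_le p q -> X q -> X p.

Lemma cover_closed_generalization (X : Spec R -> Prop) : specialization_closed X ->
  (forall p q, covers p q -> X q -> X p) -> generalization_closed X.
Proof.
move=> spX covX p q lepq Xq; apply: (cover_induction (G := X)) lepq.
  by move=> p' _ leqp'; apply: spX Xq leqp'.
by move=> p' r covr _; apply: covX.
Qed.

Lemma minimal_primes_cover : exists n (P : 'I_n -> Spec R), forall q, exists i, prime_le (P i) q.
Proof.
have [n [P [Ppr Prad]]] := radical_cover_exists HN (principal_ideal (0 : R)).
exists n, (fun i : 'I_n => exist _ (P i) (Ppr i (ltn_ord i)).1) => -[q Hq].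
have [|i hi sPq] := radical_cover_below (conj Ppr Prad) Hq.
  exact: principal_min (prime_ideal Hq) (ideal0 (prime_ideal Hq)).
by exists (Ordinal hi).
Qed.

End SpecOrder.

Section Connected.
Variable R : comRingType.
Hypothesis HN : noetherian R.
Implicit Types (p q : Spec R) (X : Spec R -> Prop).

Lemma closed_set_as_V n (P : 'I_n -> Spec R) X :
  (forall q, exists i, prime_le (P i) q) ->
  specialization_closed X -> generalization_closed X ->
  forall q, V (fun z => forall i, X (P i) -> sval (P i) z) q <-> X q.
Proof.
move=> Pcover spX genX q; split=> [VXq|Xq z Hz]; last first.
  by have [i leiq] := Pcover q; apply/leiq/Hz/(genX _ q).
apply: NNPP => nXq.
have HA i : is_ideal (fun z => X (P i) -> sval (P i) z).
  have HPi := prime_ideal (svalP (P i)).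
  split=> [_|a b Ha Hb XPi|c a Ha XPi]; first exact: ideal0.
    exact: idealD (Ha XPi) (Hb XPi).
  exact: idealMl (Ha XPi).
have [z [Az nqz]] : exists z, (forall i, X (P i) -> sval (P i) z) /\ ~ sval q z.
  apply: (prime_avoidance (svalP q) HA) => i sAq.
  have [XPi|nXPi] := classic (X (P i)); last exact/(prime1 (svalP q))/sAq.
  by apply/nXq/(spX (P i)) => // w Pw; apply: sAq.
exact/nqz/VXq.
Qed.

Lemma connected_closed_set X : spec_connected R ->
  specialization_closed X -> generalization_closed X ->
  (forall p, X p) \/ (forall p, ~ X p).
Proof.
move=> Hc spX genX; have [n [P Pcover]] := minimal_primes_cover HN.
have spnX : specialization_closed (fun p => ~ X p) by move=> p q nXp lepq /(genX p q lepq).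
have gennX : generalization_closed (fun p => ~ X p) by move=> p q lepq nXq /(spX p q)/(_ lepq).
have VX := closed_set_as_V Pcover spX genX.
have VnX := closed_set_as_V Pcover spnX gennX.
have Hideal S : is_ideal (fun z => forall i, S (P i) -> sval (P i) z).
  by apply: ideal_bigmeet => i; apply/prime_ideal/(svalP (P i)).
case: (Hc _ _ (Hideal X) (Hideal (fun p => ~ X p))).
- by move=> q; have [Xq|nXq] := classic (X q); [left; apply/VX|right; apply/VnX].
- by move=> q [/VX Xq /VnX].
- by move=> H; right => q /VX /H.
- by move=> H; left => q; apply: NNPP => /VnX /H.
Qed.

End Connected.

Lemma int_common_lower_bound (T : finType) (P : T -> int -> Prop) :
  (forall i, exists k, P i k) -> (forall i k k', k' <= k -> P i k -> P i k') ->
  exists k, forall i, P i k.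
Proof.
move=> /ClassicalEpsilon.choice [f Pf] Pdown; exists (- \sum_i `|f i|) => i.
apply: Pdown (Pf i); apply: lerNnormlW.
by rewrite (bigD1 i) //= lerDl sumr_ge0.
Qed.

Lemma int_common_upper_bound (T : finType) (P : T -> int -> Prop) :
  (forall i, exists k, P i k) -> (forall i k k', k <= k' -> P i k -> P i k') ->
  exists k, forall i, P i k.
Proof.
move=> HP Pup; have [k Pk] : exists k, forall i, P i (- k).
  apply: (@int_common_lower_bound T (fun i k => P i (- k))) => [i|i k k' le_k'k].
    by have [k Pk] := HP i; exists (- k); rewrite opprK.
  by apply: Pup; rewrite lerN2.
by exists (- k).
Qed.

Section Filtration.
Variable R : comRingType.
Hypotheses (HN : noetherian R) (Hc : spec_connected R).
Variable phi : int -> Spec R -> Prop.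
Hypotheses (Hphi : sp_filtration phi) (Hwc : weak_cousin phi).

Lemma weak_cousin_covers j p q : covers p q -> phi j q -> phi (j - 1) p.
Proof. by move=> [ltpq nomid]; apply: Hwc. Qed.

Lemma filtration_meet_empty : ~ (forall i p, phi i p) -> forall p, exists i, ~ phi i p.
Proof.
move=> nfull.
have spX : specialization_closed (fun p => forall i, phi i p).
  by move=> p q Xp lepq i; apply: Hphi.1 (Xp i) lepq.
have genX : generalization_closed (fun p => forall i, phi i p).
  apply: (cover_closed_generalization HN spX) => p q covpq Xq i.
  by rewrite -(addrK 1 i); apply: weak_cousin_covers covpq (Xq _).
have [Xall|Xnone p] := connected_closed_set HN Hc spX genX.
  by case: nfull => i p; apply: Xall.
exact: not_all_ex_not (Xnone p).
Qed.

Lemma filtration_union_full : ~ (forall i p, ~ phi i p) -> forall p, exists i, phi i p.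
Proof.
move=> nempty.
have spX : specialization_closed (fun p => exists i, phi i p).
  by move=> p q [i phip] lepq; exists i; apply: Hphi.1 phip lepq.
have genX : generalization_closed (fun p => exists i, phi i p).
  apply: (cover_closed_generalization HN spX) => p q covpq [i phiq].
  by exists (i - 1); apply: weak_cousin_covers covpq phiq.
have [//|Xnone] := connected_closed_set HN Hc spX genX.
by case: nempty => i p phip; apply: (Xnone p); exists i.
Qed.

Lemma filtration_eventually_full : ~ (forall i p, ~ phi i p) ->
  exists j0, forall p, phi j0 p.
Proof.
move=> nempty; have [n [P Pcover]] := minimal_primes_cover HN.
have [j0 Hj0] : exists j0, forall i, phi j0 (P i).
  apply: (@int_common_lower_bound _ (fun i k => phi k (P i))) => [i|i k k' lek'k].
    exact: filtration_union_full.
  exact: Hphi.2.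
by exists j0 => q; have [i leiq] := Pcover q; apply: Hphi.1 (Hj0 i) leiq.
Qed.

Lemma weak_cousin_chain j p q : phi j q -> prime_le p q ->
  exists m (c : nat -> Spec R), [/\ c 0%N = p,
    forall k, (k < m)%N -> prime_lt (c k) (c k.+1) & phi (j - m%:Z) p].
Proof.
move=> phiq; move: p; apply: (cover_induction HN) => [p _ leqp|p r covpr _].
  by exists 0%N, (fun _ => p); split => //; rewrite subr0; apply: Hphi.1 phiq leqp.
move=> [m [c [c0 chain phir]]].
exists m.+1, (fun k => if k is k'.+1 then c k' else p); split => //.
  by case=> [|k] /= hk; [rewrite c0; exact: covpr.1|exact: chain].
by rewrite -addn1 PoszD opprD addrA; apply: weak_cousin_covers covpr phir.
Qed.

Lemma weak_cousin_bounded_descent : finite_krull_dim R ->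
  exists d : nat, forall j p q, phi j q -> prime_le p q -> phi (j - d%:Z) p.
Proof.
move=> [d dimd]; exists d => j p q phiq lepq.
have [m [c [<- chain phip]]] := weak_cousin_chain phiq lepq.
by apply: Hphi.2 phip; rewrite lerD2l lerN2 lez_nat; apply: dimd chain.
Qed.

Lemma filtration_eventually_empty : finite_krull_dim R -> ~ (forall i p, phi i p) ->
  exists k, forall p, ~ phi k p.
Proof.
move=> dimR nfull; have [d descent] := weak_cousin_bounded_descent dimR.
have [n [P Pcover]] := minimal_primes_cover HN.
have [k Hk] : exists k, forall i, ~ phi k (P i).
  apply: (@int_common_upper_bound _ (fun i k => ~ phi k (P i))) => [i|i k k' lekk' nphik phik'].
    exact: filtration_meet_empty.
  exact/nphik/(Hphi.2 _ _ _ lekk' phik').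
exists (k + d%:Z) => q phiq; have [i leiq] := Pcover q.
by apply: (Hk i); rewrite -(addrK d%:Z k); apply: descent phiq leiq.
Qed.

End Filtration.

Theorem corollary4p10 (R : comRingType) (phi : int -> Spec R -> Prop) :
  noetherian R -> spec_connected R ->
  sp_filtration phi -> weak_cousin phi ->
  ~ (forall i p, ~ phi i p) ->
  ~ (forall i p, phi i p) ->
  [/\ (forall p : Spec R, exists i, ~ phi i p),
      (exists j0 : int, forall p, phi j0 p)
    & (finite_krull_dim R -> exists k : int, forall p, ~ phi k p)].
Proof.
move=> HN Hc Hphi Hwc nempty nfull; split.
- exact: filtration_meet_empty.
- exact: filtration_eventually_full.
- by move=> dimR; apply: filtration_eventually_empty.
Qed.
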